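(* If $G$ is a band, then $\chi(G)\le\lceil\frac54\omega(G)\rceil$.
   Context: Two disjoint sets $P,R$ form a graded pair if for any $p,p'\in P$, $N(p)\cap R\subseteq N(p')\cap R$ or $N(p')\cap R\subseteq N(p)\cap R$. A band is a graph whose vertex set is partitioned into seven sets $Q_1,\dots,Q_5,R_2,R_3$ such that: each is a clique; $Q_5$ is complete to $Q_1\cup Q_4$, $R_2$ is complete to $Q_1\cup Q_2\cup Q_3$, $R_3$ is complete to $Q_2\cup Q_3\cup Q_4$, $Q_2$ is complete to $Q_3$; $Q_1$ is anticomplete to $Q_3\cup R_3\cup Q_4$, $Q_4$ is anticomplete to $Q_1\cup Q_2\cup R_2$, $Q_5$ is anticomplete to $Q_2\cup R_2\cup Q_3\cup R_3$; and the pairs $\{Q_1,Q_2\}$, $\{Q_3,Q_4\}$, $\{R_2,R_3\}$ are graded. Complete/anticomplete: all edges / no edges between the sets. *)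

From mathcomp Require Import all_boot.
Set Implicit Arguments. Unset Strict Implicit. Unset Printing Implicit Defensive.

Section Graphs.
Variables (T : finType) (e : rel T).

Definition simple_graph : Prop := symmetric e /\ irreflexive e.

Definition is_clique (A : {set T}) : bool :=
  [forall x in A, forall y in A, (x != y) ==> e x y].

Definition complete_to (A B : {set T}) : bool :=
  [forall x in A, forall y in B, e x y].

Definition anticomplete_to (A B : {set T}) : bool :=
  [forall x in A, forall y in B, ~~ e x y].

Definition nbhd (p : T) : {set T} := [set y | e p y].

Definition graded_pair (P R : {set T}) : Prop :=
  [disjoint P & R] /\
  forall p p', p \in P -> p' \in P ->
    (nbhd p :&: R \subset nbhd p' :&: R) \/ (nbhd p' :&: R \subset nbhd p :&: R).

Definition band (Q1 Q2 Q3 Q4 Q5 R2 R3 : {set T}) : Prop :=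
  (let S := [:: Q1; Q2; Q3; Q4; Q5; R2; R3] in
   (forall i j, i < 7 -> j < 7 -> i != j ->
      [disjoint nth set0 S i & nth set0 S j]) /\
   Q1 :|: Q2 :|: Q3 :|: Q4 :|: Q5 :|: R2 :|: R3 = [set: T]) /\
  [/\ is_clique Q1, is_clique Q2, is_clique Q3, is_clique Q4 & is_clique Q5] /\
  (is_clique R2 /\ is_clique R3) /\
  [/\ complete_to Q5 (Q1 :|: Q4),
      complete_to R2 (Q1 :|: Q2 :|: Q3),
      complete_to R3 (Q2 :|: Q3 :|: Q4) &
      complete_to Q2 Q3] /\
  [/\ anticomplete_to Q1 (Q3 :|: R3 :|: Q4),
      anticomplete_to Q4 (Q1 :|: Q2 :|: R2) &
      anticomplete_to Q5 (Q2 :|: R2 :|: Q3 :|: R3)] /\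
  [/\ graded_pair Q1 Q2, graded_pair Q3 Q4 & graded_pair R2 R3].

Definition clique_number : nat :=
  \max_(A : {set T} | is_clique A) #|A|.

Definition colourable (k : nat) : bool :=
  [exists f : {ffun T -> 'I_k},
     [forall x, forall y, ((x != y) && e x y) ==> (f x != f y)]].

Lemma colourable_card : exists k, colourable k.
Proof.
exists #|T|; apply/existsP; exists [ffun x => enum_rank x].
apply/forallP => x; apply/forallP => y; apply/implyP => /andP[nxy _].
by rewrite !ffunE; apply: contra nxy => /eqP /enum_rank_inj ->.
Qed.

Definition chromatic_number : nat := ex_minn colourable_card.

End Graphs.

From mathcomp Require Import all_boot zify.
Set Implicit Arguments. Unset Strict Implicit. Unset Printing Implicit Defensive.

(* Removing Q5 leaves a graph in which every nonempty induced subgraph has a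
   simplicial vertex: a vertex of Q4, Q1 or R3 with the smallest neighbourhood
   in Q3, Q2 or R2 works, since the graded pair makes that neighbourhood
   contained in the neighbourhood of every other vertex on its side.  So the
   Q5-free parts of a band are coloured with as many colours as their clique
   number.  Colour R2 :|: R3 optimally and put into a set Y the vertices of Q2
   (resp. Q3) with the largest neighbourhoods in Q1 (resp. Q4), together with
   some colour classes of R2 :|: R3.  Y is anticomplete to Q5 and reuses its
   #|Q5| colours; the rest is Q5-free.  A clique of the rest meeting Q1 stays a
   clique when Y's part of Q2 is added, so it is bounded through the clique
   number of Q1 :|: Q2; counting then fits the sizes of the pieces of Y so that
   the rest needs at most ceil(5 omega / 4) - #|Q5| colours. *)

Lemma exists_top_subset (X : finType) (S : {set X}) (g : X -> nat) n :
  n <= #|S| ->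
  exists Tp : {set X}, [/\ Tp \subset S, #|Tp| = n &
    forall t v, t \in Tp -> v \in S :\: Tp -> g v <= g t].
Proof.
elim: n => [|n IHn] leSn.
  by exists set0; split=> [||t v]; rewrite ?sub0set ?cards0 ?inE.
have [Tp [sTS cardTp topTp]] := IHn (ltnW leSn).
have /card_gt0P[x0 x0ST] : 0 < #|S :\: Tp| by rewrite cardsDS // cardTp subn_gt0.
case: (arg_maxnP g x0ST) => m mST maxm.
have [mTp mS] : m \notin Tp /\ m \in S by apply/andP; rewrite -in_setD.
exists (m |: Tp); split.
- by rewrite subUset sub1set mS sTS.
- by rewrite cardsU1 mTp cardTp.
move=> t v /setU1P[-> | tTp]; rewrite !inE negb_or => /andP[/andP[_ vTp] vS];
  have vST : v \in S :\: Tp by rewrite in_setD vTp.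
- exact: maxm.
- exact: topTp.
Qed.

Lemma exists_subset_card (X : finType) (S : {set X}) n :
  n <= #|S| -> exists2 B : {set X}, B \subset S & #|B| = n.
Proof. by case/(exists_top_subset (fun=> 0)) => B []; exists B. Qed.

Lemma exists_fresh (s : seq nat) c : size s < c -> exists2 i, i < c & i \notin s.
Proof.
move=> lt_s_c; case: (boolP (all (mem s) (iota 0 c))) => [/allP sub | /allPn[i]].
  by have := uniq_leq_size (iota_uniq 0 c) sub; rewrite size_iota leqNgt lt_s_c.
by rewrite mem_iota => /andP[_ ic] nis; exists i.
Qed.

Lemma card_setU_disjoint (X : finType) (A B : {set X}) :
  [disjoint A & B] -> #|A :|: B| = #|A| + #|B|.
Proof. by move=> dAB; apply/eqP; rewrite (leq_card_setU A B).2. Qed.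

Lemma card_setU_split (X : finType) (A B : {set X}) :
  #|A :|: B| = #|A :&: B| + #|A :\: B| + #|B :\: A|.
Proof. by rewrite cardsU -(cardsID B A) -(cardsID A B) setIC; lia. Qed.

Lemma card_subset_setU (X : finType) (A B C : {set X}) :
  C \subset A :|: B -> #|C| <= #|A| + #|B|.
Proof. by move/subset_leq_card/leq_trans; apply; rewrite (leq_card_setU A B). Qed.

Lemma leq_mul_divn_up m d : 0 < d -> m <= d * ((m + d.-1) %/ d).
Proof. by move=> d0; have := divn_eq (m + d.-1) d; have := ltn_pmod (m + d.-1) d0; lia. Qed.

Lemma split_leq_add n A B : n <= A + B -> exists u v, [/\ u <= A, v <= B & u + v = n].
Proof. by move=> le_n_AB; exists (minn n A), (n - minn n A); split; lia. Qed.

(* The arithmetic behind splitting a band into Y, coloured with the z colours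
   of Q5, and the rest, coloured with k - z colours.  Here a, b stand for #|Q1|,
   #|Q4|; l, r for the clique numbers of Q1 :|: Q2 and Q4 :|: Q3; q2, q3 for
   #|Q2|, #|Q3|; p for the colours of R2 :|: R3 used on both R2 and R3, and s2,
   s3 for those used on one side only.  The witnesses count the vertices of Q2,
   Q3 and the colours of each kind kept out of Y.  They are chosen greedily: of
   the N items that do not fit into Y, the vertices of Q2 and Q3 beyond
   e2 = l - a and e3 = r - b are kept out first, then the one-sided items up to
   the slack of their side, and only then shared colours. *)
Lemma colour_budget (w k z a b q2 q3 l r p s2 s3 : nat) :
  5 * w <= 4 * k ->
  a + z <= w -> b + z <= w -> a <= l <= a + q2 -> b <= r <= b + q3 ->
  l + p + s2 <= w -> r + p + s3 <= w -> q2 + q3 + p + s2 + s3 <= w ->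
  exists x2 x3 xp y2 y3,
   [/\ x2 <= q2, x3 <= q3, xp <= p, y2 <= s2 & y3 <= s3] /\
   [/\ xp + y2 + a + z <= k, xp + y2 + l + x2 + z <= k + q2,
       xp + y3 + b + z <= k & xp + y3 + r + x3 + z <= k + q3] /\
   q2 + q3 + p + s2 + s3 <= z + (x2 + x3 + xp + y2 + y3) /\
   x2 + x3 + xp + y2 + y3 + z <= k.
Proof.
move=> hk haz hbz /andP[hal hla] /andP[hbr hrb] hl hr hq.
have hwk : w <= k by lia.
have [e2 El] : exists e2, l = a + e2 by exists (l - a); lia.
have [f2 Eq2] : exists f2, q2 = e2 + f2 by exists (q2 - e2); lia.
have [e3 Er] : exists e3, r = b + e3 by exists (r - b); lia.
have [f3 Eq3] : exists f3, q3 = e3 + f3 by exists (q3 - e3); lia.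
have [c Ek] : exists c, k = z + c by exists (k - z); lia.
subst l q2 r q3 k.
case: (leqP (e2 + f2 + (e3 + f3) + p + s2 + s3) z) => [small | big].
  by exists 0, 0, 0, 0, 0; split; [split|split;[split|split]]; lia.
have [N EN] : exists N, e2 + f2 + (e3 + f3) + p + s2 + s3 = z + N.
  by exists (e2 + f2 + (e3 + f3) + p + s2 + s3 - z); lia.
have [L [hL1 hL2 hL3]] :
    exists L, [/\ L <= s2 + e2, L + a <= c & (L = s2 + e2 \/ L + a = c)].
  case: (leqP (s2 + e2 + a) c) => ?; [exists (s2 + e2) | exists (c - a)]; split; lia.
have [R [hR1 hR2 hR3]] :
    exists R, [/\ R <= s3 + e3, R + b <= c & (R = s3 + e3 \/ R + b = c)].
  case: (leqP (s3 + e3 + b) c) => ?; [exists (s3 + e3) | exists (c - b)]; split; lia.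
case: (leqP N (f2 + f3 + L + R)) => hN.
  have [wf [ys [? ? ?]]] := @split_leq_add N (f2 + f3) (L + R) ltac:(lia).
  have [w2 [w3 [? ? ?]]] := @split_leq_add wf f2 f3 ltac:(lia).
  have [yL [yR [? ? ?]]] := @split_leq_add ys L R ltac:(lia).
  have [y2 [x2 [? ? ?]]] := @split_leq_add yL s2 e2 ltac:(lia).
  have [y3 [x3 [? ? ?]]] := @split_leq_add yR s3 e3 ltac:(lia).
  by exists (w2 + x2), (w3 + x3), 0, y2, y3; split; [split|split;[split|split]]; lia.
have ? : L = s2 + e2 by case: hL3 => //; lia.
have ? : R = s3 + e3 by case: hR3 => //; lia.
exists (f2 + e2), (f3 + e3), (N - (f2 + f3 + (s2 + e2) + (s3 + e3))), s2, s3.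
by split; [split|split;[split|split]]; lia.
Qed.

Lemma exists_split_subset (I : finType) (F2 F3 : {set I}) xp y2 y3 :
  xp <= #|F2 :&: F3| -> y2 <= #|F2 :\: F3| -> y3 <= #|F3 :\: F2| ->
  exists2 K : {set I}, K \subset F2 :|: F3 &
    [/\ #|K| = xp + y2 + y3, #|F2 :&: K| <= xp + y2 & #|F3 :&: K| <= xp + y3].
Proof.
move=> /exists_subset_card[P sP <-] /exists_subset_card[K2 sK2 <-].
move=> /exists_subset_card[K3 sK3 <-].
have inF2 x : x \in P :|: K2 -> x \in F2.
  by case/setUP => [/(subsetP sP) | /(subsetP sK2)]; rewrite !inE => /andP[].
have inF3 x : x \in P :|: K3 -> x \in F3.
  by case/setUP => [/(subsetP sP) | /(subsetP sK3)]; rewrite !inE => /andP[].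
have notF2 x : x \in K3 -> x \notin F2 by move/(subsetP sK3); rewrite !inE => /andP[].
have notF3 x : x \in K2 -> x \notin F3 by move/(subsetP sK2); rewrite !inE => /andP[].
have dPK2 : [disjoint P & K2].
  by apply/pred0P => x /=; apply/negbTE/andP => -[xP /notF3]; rewrite inF3 // inE xP.
have dPK2K3 : [disjoint P :|: K2 & K3].
  by apply/pred0P => x /=; apply/negbTE/andP => -[/inF2 xF2 /notF2]; rewrite xF2.
exists (P :|: K2 :|: K3); last split.
- apply/subsetP => x /setUP[/inF2 xF2 | xK3]; first by rewrite inE xF2.
  by rewrite inE inF3 ?orbT // inE xK3 orbT.
- by rewrite !card_setU_disjoint.
- apply/card_subset_setU/subsetP => x /setIP[xF2]; rewrite inE => /orP[// | xK3].
  by move: (notF2 x xK3); rewrite xF2.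
- apply/card_subset_setU/subsetP => x /setIP[xF3]; rewrite !inE -orbA => /or3P[-> | xK2 | ->].
  + by [].
  + by move: (notF3 x xK2); rewrite xF3.
  + by rewrite orbT.
Qed.

Section SimpleGraph.
Variables (T : finType) (e : rel T).
Hypotheses (esym : symmetric e) (eirr : irreflexive e).

Definition colorable_on (U : {set T}) (c : nat) :=
  exists f : T -> nat,
    {in U, forall x, f x < c} /\ {in U &, forall x y, e x y -> f x != f y}.

Definition clique_number_in (S : {set T}) :=
  \max_(A : {set T} | (A \subset S) && is_clique e A) #|A|.

Lemma cliqueP (A : {set T}) :
  reflect {in A &, forall x y, x != y -> e x y} (is_clique e A).
Proof.
apply: (iffP forall_inP) => [cA x y xA yA | cA x xA].
  exact/implyP/(forall_inP (cA x xA)).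
by apply/forall_inP => y yA; apply/implyP/cA.
Qed.

Lemma completeP (A B : {set T}) :
  reflect (forall x y, x \in A -> y \in B -> e x y) (complete_to e A B).
Proof.
apply: (iffP forall_inP) => [cAB x y xA yB | cAB x xA].
  exact: (forall_inP (cAB x xA)).
by apply/forall_inP => y; apply: cAB.
Qed.

Lemma anticompleteP (A B : {set T}) :
  reflect (forall x y, x \in A -> y \in B -> ~~ e x y) (anticomplete_to e A B).
Proof.
apply: (iffP forall_inP) => [aAB x y xA yB | aAB x xA].
  exact: (forall_inP (aAB x xA)).
by apply/forall_inP => y; apply: aAB.
Qed.

Lemma clique_subset (A B : {set T}) :
  A \subset B -> is_clique e B -> is_clique e A.
Proof. by move=> /subsetP sAB /cliqueP cB; apply/cliqueP => x y /sAB xB /sAB; apply: cB. Qed.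

Lemma complete_to_sym (A B : {set T}) : complete_to e A B -> complete_to e B A.
Proof. by move/completeP => cAB; apply/completeP => x y xB yA; rewrite esym cAB. Qed.

Lemma complete_to_subset (A A' B B' : {set T}) :
  A' \subset A -> B' \subset B -> complete_to e A B -> complete_to e A' B'.
Proof.
move=> /subsetP sA /subsetP sB /completeP cAB.
by apply/completeP => x y /sA xA /sB yB; apply: cAB.
Qed.

Lemma complete_to_setUl (A B C : {set T}) :
  complete_to e A C -> complete_to e B C -> complete_to e (A :|: B) C.
Proof.
move=> /completeP cAC /completeP cBC.
by apply/completeP => x y /setUP[]; [apply: cAC | apply: cBC].
Qed.

Lemma anticomplete_to_subset (A A' B B' : {set T}) :
  A' \subset A -> B' \subset B -> anticomplete_to e A B -> anticomplete_to e A' B'.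
Proof.
move=> /subsetP sA /subsetP sB /anticompleteP aAB.
by apply/anticompleteP => x y /sA xA /sB yB; apply: aAB.
Qed.

Lemma complete_to_disjoint (A B : {set T}) :
  complete_to e A B -> [disjoint A & B].
Proof.
move/completeP => cAB; apply/pred0P => x /=.
by apply/negP => /andP[xA /(cAB x x xA)]; rewrite eirr.
Qed.

Lemma clique_setU (A B : {set T}) :
  is_clique e A -> is_clique e B -> complete_to e A B -> is_clique e (A :|: B).
Proof.
move=> /cliqueP cA /cliqueP cB /completeP cAB.
apply/cliqueP => x y /setUP[xA|xB] /setUP[yA|yB] nxy.
- exact: cA.
- exact: cAB.
- by rewrite esym cAB.
- exact: cB.
Qed.

Lemma card_le_clique_number_in (S A : {set T}) :
  A \subset S -> is_clique e A -> #|A| <= clique_number_in S.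
Proof. by move=> sAS cA; apply: (leq_bigmax_cond A); rewrite sAS cA. Qed.

Lemma clique_number_in_le (S : {set T}) m :
  (forall A : {set T}, A \subset S -> is_clique e A -> #|A| <= m) ->
  clique_number_in S <= m.
Proof. by move=> leAm; apply/bigmax_leqP => A /andP[]; apply: leAm. Qed.

Lemma clique_number_inT : clique_number_in [set: T] = clique_number e.
Proof. by apply: eq_bigl => A; rewrite subsetT. Qed.

Lemma card_le_clique_number (A : {set T}) :
  is_clique e A -> #|A| <= clique_number e.
Proof. by rewrite -clique_number_inT; apply: card_le_clique_number_in; rewrite subsetT. Qed.

Lemma card_complete_cliques (S A B : {set T}) :
  A :|: B \subset S -> is_clique e A -> is_clique e B -> complete_to e A B ->
  #|A| + #|B| <= clique_number_in S.
Proof.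
move=> sABS cA cB cAB; rewrite -card_setU_disjoint ?complete_to_disjoint //.
exact/card_le_clique_number_in/clique_setU.
Qed.

Lemma clique_number_in_card (S : {set T}) : clique_number_in S <= #|S|.
Proof. by apply: clique_number_in_le => A sAS _; apply: subset_leq_card. Qed.

Lemma clique_number_in_setU (A B : {set T}) :
  is_clique e A -> #|A| <= clique_number_in (A :|: B) <= #|A| + #|B|.
Proof.
move=> cA; rewrite card_le_clique_number_in ?subsetUl //=.
exact: leq_trans (clique_number_in_card _) (leq_card_setU _ _).
Qed.

Lemma clique_number_in_complete (A S : {set T}) :
  is_clique e A -> complete_to e A S -> #|A| + clique_number_in S <= clique_number e.
Proof.
move=> cA cAS; rewrite -leq_subRL ?card_le_clique_number //.
apply: clique_number_in_le => B sBS cB; rewrite leq_subRL ?card_le_clique_number //.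
rewrite -clique_number_inT; apply: card_complete_cliques; rewrite ?subsetT //.
exact: complete_to_subset (subxx _) sBS cAS.
Qed.

Lemma colorable_on_subset (U V : {set T}) c d :
  V \subset U -> c <= d -> colorable_on U c -> colorable_on V d.
Proof.
move=> /subsetP sVU lecd [f [fc fp]]; exists f; split.
  by move=> x /sVU /fc /leq_trans; apply.
by move=> x y /sVU xU /sVU; apply: fp.
Qed.

Lemma colorable_on_setU (U1 U2 : {set T}) c1 c2 :
  colorable_on U1 c1 -> colorable_on U2 c2 -> colorable_on (U1 :|: U2) (c1 + c2).
Proof.
move=> [f1 [f1c f1p]] [f2 [f2c f2p]].
exists (fun x => if x \in U1 then f1 x else c1 + f2 x); split.
  move=> x; case: ifP => [xU1 _ | xU1 /setUP[|/f2c]].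
  - exact: leq_trans (f1c x xU1) (leq_addr _ _).
  - by rewrite xU1.
  - by rewrite ltn_add2l.
have U2P x : x \in U1 = false -> x \in U1 :|: U2 -> x \in U2.
  by move=> xU1 /setUP[]; rewrite ?xU1.
move=> x y; case: ifP => xU1; case: ifP => yU1.
- by move=> _ _; apply: f1p.
- by move=> _ _ _; rewrite neq_ltn (leq_trans (f1c x xU1)) ?leq_addr.
- by move=> _ _ _; rewrite neq_ltn (leq_trans (f1c y yU1)) ?leq_addr ?orbT.
- by move=> /(U2P _ xU1) xU2 /(U2P _ yU1) yU2 exy; rewrite eqn_add2l f2p.
Qed.

Lemma colorable_on_setU_anticomplete (U1 U2 : {set T}) c :
  anticomplete_to e U1 U2 -> colorable_on U1 c -> colorable_on U2 c ->
  colorable_on (U1 :|: U2) c.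
Proof.
move=> /anticompleteP aU [f1 [f1c f1p]] [f2 [f2c f2p]].
have U2P x : x \in U1 = false -> x \in U1 :|: U2 -> x \in U2.
  by move=> xU1 /setUP[]; rewrite ?xU1.
exists (fun x => if x \in U1 then f1 x else f2 x); split.
  by move=> x; case: ifP => [/f1c // | xU1 /(U2P _ xU1) /f2c].
move=> x y; case: ifP => xU1; case: ifP => yU1.
- by move=> _ _; apply: f1p.
- by move=> _ /(U2P _ yU1) yU2 exy; move: (aU _ _ xU1 yU2); rewrite exy.
- by move=> /(U2P _ xU1) xU2 _ exy; move: (aU _ _ yU1 xU2); rewrite esym exy.
- by move=> /(U2P _ xU1) xU2 /(U2P _ yU1); apply: f2p.
Qed.

Lemma colorable_on_card (U : {set T}) : colorable_on U #|U|.
Proof.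
exists (index^~ (enum U)); split=> [x xU | x y xU yU exy].
  by rewrite cardE index_mem mem_enum.
apply: contraTneq exy => /(congr1 (nth x (enum U))).
by rewrite !nth_index ?mem_enum // => ->; rewrite eirr.
Qed.

Lemma colorable_on_degenerate c (U : {set T}) :
  (forall W : {set T}, W \subset U -> W != set0 ->
     exists2 v, v \in W & #|nbhd e v :&: W| < c) ->
  colorable_on U c.
Proof.
elim: {U}_.+1 {-2}U (ltnSn #|U|) => // n IHn U ltUn degU.
have [-> | U0] := eqVneq U set0; first by exists (fun=> 0); split=> x; rewrite inE.
have [v vU small_v] := degU U (subxx U) U0.
have [f [fc fp]] : colorable_on (U :\ v) c.
  apply: IHn => [|W sW W0]; first by rewrite (cardsD1 v U) vU in ltUn.
  by apply: degU W0; apply: subset_trans sW (subsetDl _ _).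
have [i ic fresh_i] : exists2 i, i < c & i \notin [seq f y | y in nbhd e v :&: U].
  by apply: exists_fresh; rewrite size_image.
have fresh y : y \in U -> e v y -> i != f y.
  by move=> yU evy; apply: contraNneq fresh_i => ->; apply: image_f; rewrite !inE evy.
have Uv x : x \in U -> x != v -> x \in U :\ v by rewrite !inE => -> ->.
exists (fun x => if x == v then i else f x); split=> [x xU | x y xU yU exy].
  by case: eqP => [// | /eqP xv]; apply/fc/Uv.
have [xv | xv] := eqVneq x v; have [yv | yv] := eqVneq y v; subst.
- by rewrite eirr in exy.
- exact: fresh.
- by rewrite eq_sym fresh // esym.
- exact: fp (Uv _ xU xv) (Uv _ yU yv) exy.
Qed.

Lemma colorable_on_simplicial (U : {set T}) c :
  (forall W : {set T}, W \subset U -> W != set0 ->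
     exists2 v, v \in W & is_clique e (v |: nbhd e v :&: W)) ->
  (forall C : {set T}, C \subset U -> is_clique e C -> #|C| <= c) ->
  colorable_on U c.
Proof.
move=> simpU cliqueU; apply: colorable_on_degenerate => W sWU W0.
have [v vW cv] := simpU W sWU W0; exists v => //.
have vN : v \notin nbhd e v :&: W by rewrite !inE eirr.
have := cliqueU _ _ cv; rewrite cardsU1 vN; apply.
by rewrite subUset sub1set (subsetP sWU) // (subset_trans (subsetIr _ _) sWU).
Qed.

Lemma chromatic_number_le c : colorable_on [set: T] c -> chromatic_number e <= c.
Proof.
move=> [f [fc fp]]; rewrite /chromatic_number; case: ex_minnP => m _; apply.
apply/existsP; exists [ffun x => Ordinal (fc x (in_setT x))].
apply/forallP => x; apply/forallP => y; apply/implyP => /andP[_ exy].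
by rewrite !ffunE -val_eqE /= fp ?in_setT.
Qed.

Lemma colorable_on_ord (U : {set T}) c :
  colorable_on U c ->
  exists h : T -> 'I_c.+1,
    {in U &, forall x y, e x y -> h x != h y} /\ #|h @: U| <= c.
Proof.
move=> [f [fc fp]]; have fcS x : x \in U -> f x < c.+1 by move/fc/ltnW.
exists (fun x => inord (f x)); split=> [x y xU yU exy | ].
  by rewrite -val_eqE /= !inordK ?fcS ?fp.
have : [set (inord (f x) : 'I_c.+1) | x in U] \subset [set~ ord_max].
  apply/subsetP => _ /imsetP[x xU ->].
  by rewrite !inE -val_eqE /= inordK ?fcS // neq_ltn fc.
by move/subset_leq_card; rewrite cardsC1 card_ord.
Qed.

Lemma card_clique_le_colours (I : finType) (h : T -> I) (U C : {set T}) (K : {set I}) :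
  {in U &, forall x y, e x y -> h x != h y} -> C \subset U -> is_clique e C ->
  h @: C \subset K -> #|C| <= #|K|.
Proof.
move=> hp /subsetP sCU /cliqueP cC /subset_leq_card; apply: leq_trans.
rewrite (card_in_imset (f := h)) // => x y xC yC; apply: contra_eq => nxy.
exact: hp (sCU _ xC) (sCU _ yC) (cC _ _ xC yC nxy).
Qed.

Lemma graded_pair_sym (P S : {set T}) : graded_pair e P S -> graded_pair e S P.
Proof.
move=> [dPS gPS]; split=> [|s s' sS s'S]; first by rewrite disjoint_sym.
case: (boolP (nbhd e s :&: P \subset nbhd e s' :&: P)) => [sub | /subsetPn[p psP ns'p]].
  by left.
right.
move: psP ns'p; rewrite !inE => /andP[esp pP]; rewrite pP andbT => ns'p.
apply/subsetP => p'; rewrite !inE => /andP[es'p' p'P]; rewrite p'P andbT.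
apply/negPn/negP => nsp'.
case: (gPS p p' pP p'P) => /subsetP sub; [move: (sub s) | move: (sub s')];
  rewrite !inE ?sS ?s'S !andbT.
- by rewrite [e p s]esym esp [e p' s]esym (negbTE nsp') => /(_ isT).
- by rewrite [e p' s']esym es'p' [e p s']esym (negbTE ns'p) => /(_ isT).
Qed.

Lemma graded_pair_subset (P S : {set T}) p p' :
  graded_pair e P S -> p \in P -> p' \in P ->
  #|nbhd e p :&: S| <= #|nbhd e p' :&: S| -> nbhd e p :&: S \subset nbhd e p' :&: S.
Proof.
move=> [_ gPS] pP p'P le_pp'; case: (gPS p p' pP p'P) => // sub.
by have /eqP <- : nbhd e p' :&: S == nbhd e p :&: S by rewrite eqEcard sub le_pp'.
Qed.

Lemma exists_simplicial (W P S X : {set T}) :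
  graded_pair e P S -> is_clique e P -> is_clique e S -> is_clique e X ->
  complete_to e X P -> complete_to e X S -> W :&: P != set0 ->
  {in W :&: P, forall v, nbhd e v :&: W \subset (W :&: P) :|: S :|: X} ->
  exists2 v, v \in W & is_clique e (v |: nbhd e v :&: W).
Proof.
move=> gPS cP cS cX cXP cXS /set0Pn[u uWP] nbhdWP.
have [v vWP minv] := arg_minnP (fun v => #|nbhd e v :&: S|) uWP.
have [vW vP] : v \in W /\ v \in P by apply/andP; rewrite -in_setI.
exists v => //.
have cWP : is_clique e (W :&: P) by apply: clique_subset cP; apply: subsetIr.
have cNS : is_clique e (nbhd e v :&: S) by apply: clique_subset cS; apply: subsetIr.
have cWP_NS : complete_to e (W :&: P) (nbhd e v :&: S).
  apply/completeP => w s wWP; have /setIP[_ wP] := wWP.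
  move/(subsetP (graded_pair_subset gPS vP wP (minv w wWP))).
  by rewrite inE => /andP[]; rewrite inE.
have cX_WPNS : complete_to e (W :&: P :|: nbhd e v :&: S) X.
  apply: complete_to_sym; apply/completeP => x y xX /setUP[/setIP[_ yP] | /setIP[_ yS]].
    exact: (completeP _ _ cXP).
  exact: (completeP _ _ cXS).
apply: clique_subset (clique_setU (clique_setU cWP cNS cWP_NS) cX cX_WPNS).
rewrite subUset sub1set !inE vW vP /=; apply/subsetP => y yN.
have /setIP[/[1!inE] evy _] := yN; move: (subsetP (nbhdWP v vWP) y yN).
by rewrite !inE evy => /orP[/orP[-> | ->] | ->]; rewrite ?orbT.
Qed.

Section TopSubset.
Variables (P S Tp : {set T}).
Hypotheses (gSP : graded_pair e S P) (cS : is_clique e S) (sTS : Tp \subset S).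
Hypothesis topTp : forall t v, t \in Tp -> v \in S :\: Tp ->
  #|nbhd e v :&: P| <= #|nbhd e t :&: P|.

Lemma complete_to_top_subset (D : {set T}) :
  is_clique e D -> D \subset P :|: S -> [disjoint D & Tp] -> D :&: S != set0 ->
  complete_to e D Tp.
Proof.
move=> /cliqueP cD sDPS dDT /set0Pn[v /setIP[vD vS]].
have vTp : v \notin Tp by rewrite (disjointFr dDT vD).
apply/completeP => d t dD tTp; have tS := subsetP sTS t tTp.
have dt : d != t by apply: contraTneq tTp => <-; rewrite (disjointFr dDT dD).
have [dS | dNS] := boolP (d \in S); first by apply: (cliqueP _ cS).
have dP : d \in P by move: (subsetP sDPS d dD); rewrite inE (negbTE dNS) orbF.
have evd : e v d by apply: cD => //; apply: contraNneq dNS => <-.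
have sub := graded_pair_subset gSP vS tS (topTp tTp _); rewrite inE vTp vS in sub.
have : d \in nbhd e t :&: P by apply: (subsetP (sub isT)); rewrite !inE evd dP.
by rewrite !inE esym => /andP[].
Qed.

Lemma clique_top_subset_bound (D : {set T}) :
  is_clique e D -> D \subset P :|: S -> [disjoint D & Tp] ->
  #|D| <= #|P| \/ #|D| + #|Tp| <= clique_number_in (P :|: S).
Proof.
move=> cD sDPS dDT; have [DS0 | DS] := eqVneq (D :&: S) set0.
  left; apply/subset_leq_card/subsetP => d dD.
  move: (subsetP sDPS d dD); rewrite inE => /orP[// | dS].
  by move/setP/(_ d): DS0; rewrite !inE dD dS.
right; apply: card_complete_cliques; rewrite ?subUset ?sDPS ?(clique_subset sTS) //.
  exact: subset_trans sTS (subsetUr _ _).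
exact: complete_to_top_subset.
Qed.

End TopSubset.

Section Band.
Variables (Q1 Q2 Q3 Q4 Q5 R2 R3 : {set T}).
Hypothesis bandG : band e Q1 Q2 Q3 Q4 Q5 R2 R3.

Local Notation R := (R2 :|: R3).
Local Notation M := (Q2 :|: R2 :|: Q3 :|: R3).

Let cover x : x \in Q1 :|: Q2 :|: Q3 :|: Q4 :|: Q5 :|: R2 :|: R3.
Proof. by case: bandG => [[_ ->]]; rewrite inE. Qed.

Let Q5_disjoint_M : [disjoint Q5 & M].
Proof.
case: bandG => [[dis _] _].
have d2 : [disjoint Q5 & Q2] := dis 4 1 isT isT isT.
have d3 : [disjoint Q5 & Q3] := dis 4 2 isT isT isT.
have d5 : [disjoint Q5 & R2] := dis 4 5 isT isT isT.
have d6 : [disjoint Q5 & R3] := dis 4 6 isT isT isT.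
apply/pred0P => x /=; apply/negbTE/andP => -[x5]; rewrite !inE.
by rewrite (disjointFr d2 x5) (disjointFr d3 x5) (disjointFr d5 x5) (disjointFr d6 x5).
Qed.

Let cQ1 : is_clique e Q1. Proof. by case: bandG => _ [[]]. Qed.
Let cQ2 : is_clique e Q2. Proof. by case: bandG => _ [[]]. Qed.
Let cQ3 : is_clique e Q3. Proof. by case: bandG => _ [[]]. Qed.
Let cQ4 : is_clique e Q4. Proof. by case: bandG => _ [[]]. Qed.
Let cQ5 : is_clique e Q5. Proof. by case: bandG => _ [[]]. Qed.
Let cR2 : is_clique e R2. Proof. by case: bandG => _ [_ [[]]]. Qed.
Let cR3 : is_clique e R3. Proof. by case: bandG => _ [_ [[]]]. Qed.

Let Q5_Q1 : complete_to e Q5 Q1.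
Proof.
case: bandG => _ [_ [_ [[c5 _ _ _] _]]].
exact: complete_to_subset (subxx _) (subsetUl _ _) c5.
Qed.

Let Q5_Q4 : complete_to e Q5 Q4.
Proof.
case: bandG => _ [_ [_ [[c5 _ _ _] _]]].
exact: complete_to_subset (subxx _) (subsetUr _ _) c5.
Qed.

Let R2_Q12 : complete_to e R2 (Q1 :|: Q2).
Proof.
case: bandG => _ [_ [_ [[_ c2 _ _] _]]].
exact: complete_to_subset (subxx _) (subsetUl _ _) c2.
Qed.

Let R3_Q43 : complete_to e R3 (Q4 :|: Q3).
Proof.
case: bandG => _ [_ [_ [[_ _ c3 _] _]]]; apply: complete_to_subset (subxx _) _ c3.
by apply/subsetP => x; rewrite !inE => /orP[] ->; rewrite ?orbT.
Qed.

Let Q2_Q3 : complete_to e Q2 Q3.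
Proof. by case: bandG => _ [_ [_ [[]]]]. Qed.

Let Q23_R : complete_to e (Q2 :|: Q3) R.
Proof.
case: bandG => _ [_ [_ [[_ c2 c3 _] _]]]; apply/complete_to_sym/complete_to_setUl.
  by apply: complete_to_subset (subxx _) _ c2; rewrite -setUA subsetUr.
by apply: complete_to_subset (subxx _) _ c3; rewrite subsetUl.
Qed.

Let Q1_anti : anticomplete_to e Q1 (Q3 :|: R3 :|: Q4).
Proof. by case: bandG => _ [_ [_ [_ [[]]]]]. Qed.

Let Q4_anti : anticomplete_to e Q4 (Q1 :|: Q2 :|: R2).
Proof. by case: bandG => _ [_ [_ [_ [[]]]]]. Qed.

Let Q5_anti : anticomplete_to e Q5 M.
Proof. by case: bandG => _ [_ [_ [_ [[]]]]]. Qed.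

Let g12 : graded_pair e Q1 Q2. Proof. by case: bandG => _ [_ [_ [_ [_ []]]]]. Qed.
Let g34 : graded_pair e Q3 Q4. Proof. by case: bandG => _ [_ [_ [_ [_ []]]]]. Qed.
Let gR : graded_pair e R2 R3. Proof. by case: bandG => _ [_ [_ [_ [_ []]]]]. Qed.

Lemma nbhd_Q1 v : v \in Q1 -> nbhd e v :\: Q5 \subset Q1 :|: Q2 :|: R2.
Proof.
move=> vQ1; apply/subsetP => y /setDP[/[1!inE] evy y5].
have yN : y \notin Q3 :|: R3 :|: Q4.
  by apply: contraL evy; apply: (anticompleteP _ _ Q1_anti).
move: (cover y) yN; rewrite !inE (negbTE y5).
by case: (y \in Q1); case: (y \in Q2); case: (y \in Q3); case: (y \in Q4);
  case: (y \in R2); case: (y \in R3).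
Qed.

Lemma nbhd_Q4 v : v \in Q4 -> nbhd e v :\: Q5 \subset Q4 :|: Q3 :|: R3.
Proof.
move=> vQ4; apply/subsetP => y /setDP[/[1!inE] evy y5].
have yN : y \notin Q1 :|: Q2 :|: R2.
  by apply: contraL evy; apply: (anticompleteP _ _ Q4_anti).
move: (cover y) yN; rewrite !inE (negbTE y5).
by case: (y \in Q1); case: (y \in Q2); case: (y \in Q3); case: (y \in Q4);
  case: (y \in R2); case: (y \in R3).
Qed.

Lemma mem_M x : x \notin Q1 -> x \notin Q4 -> x \notin Q5 -> x \in M.
Proof.
move: (cover x); rewrite !inE.
by case: (x \in Q1); case: (x \in Q2); case: (x \in Q3); case: (x \in Q4);
  case: (x \in Q5); case: (x \in R2); case: (x \in R3).
Qed.

Lemma exists_simplicial_Q5_free (W : {set T}) :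
  [disjoint W & Q5] -> W != set0 ->
  exists2 v, v \in W & is_clique e (v |: nbhd e v :&: W).
Proof.
move=> dW5 W0; have nbhdW v : nbhd e v :&: W \subset nbhd e v :\: Q5.
  by apply/subsetP => y /setIP[yN yW]; rewrite inE yN (disjointFr dW5 yW).
have [dW4 | W4] := boolP [disjoint W & Q4]; last first.
  apply: (exists_simplicial (graded_pair_sym g34) cQ4 cQ3 cR3); rewrite ?setI_eq0 //.
  - exact: complete_to_subset (subxx _) (subsetUl _ _) R3_Q43.
  - exact: complete_to_subset (subxx _) (subsetUr _ _) R3_Q43.
  move=> v /setIP[_ vQ4]; apply/subsetP => y yNW.
  have /setIP[_ yW] := yNW; move: (subsetP (subset_trans (nbhdW v) (nbhd_Q4 vQ4)) y yNW).
  by rewrite !inE yW.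
have [dW1 | W1] := boolP [disjoint W & Q1]; last first.
  apply: (exists_simplicial g12 cQ1 cQ2 cR2); rewrite ?setI_eq0 //.
  - exact: complete_to_subset (subxx _) (subsetUl _ _) R2_Q12.
  - exact: complete_to_subset (subxx _) (subsetUr _ _) R2_Q12.
  move=> v /setIP[_ vQ1]; apply/subsetP => y yNW.
  have /setIP[_ yW] := yNW; move: (subsetP (subset_trans (nbhdW v) (nbhd_Q1 vQ1)) y yNW).
  by rewrite !inE yW.
have WM y : y \in W -> y \in M.
  by move=> yW; rewrite mem_M ?(disjointFr dW1 yW) ?(disjointFr dW4 yW) ?(disjointFr dW5 yW).
have cQ23 : is_clique e (Q2 :|: Q3) by apply: clique_setU.
have [dW3 | W3] := boolP [disjoint W & R3]; last first.
  apply: (exists_simplicial (graded_pair_sym gR) cR3 cR2 cQ23); rewrite ?setI_eq0 //.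
  - exact: complete_to_subset (subxx _) (subsetUr _ _) Q23_R.
  - exact: complete_to_subset (subxx _) (subsetUl _ _) Q23_R.
  move=> v _; apply/subsetP => y /setIP[_ yW]; move: (WM y yW).
  by rewrite !inE yW; case: (y \in Q2); case: (y \in Q3); case: (y \in R2); case: (y \in R3).
have WQ23R2 y : y \in W -> y \in Q2 :|: Q3 :|: R2.
  move=> yW; move: (WM y yW); rewrite !inE (disjointFr dW3 yW) orbF.
  by case: (y \in Q2); case: (y \in Q3); case: (y \in R2).
have cQ23R2 : is_clique e (Q2 :|: Q3 :|: R2).
  exact/clique_setU/(complete_to_subset (subxx _) (subsetUl _ _) Q23_R).
have [v vW] := set0Pn _ W0; exists v => //; apply: clique_subset cQ23R2.
by rewrite subUset sub1set WQ23R2 //=; apply/subsetP => y /setIP[_ /WQ23R2].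
Qed.

Lemma colorable_on_Q5_free (U : {set T}) c :
  [disjoint U & Q5] ->
  (forall C : {set T}, C \subset U -> is_clique e C -> #|C| <= c) ->
  colorable_on U c.
Proof.
move=> dU5; apply: colorable_on_simplicial => W sWU.
by apply: exists_simplicial_Q5_free; apply: disjointWl sWU dU5.
Qed.

Lemma colouring_R :
  exists n (h : T -> 'I_n), [/\ {in R &, forall x y, e x y -> h x != h y},
    #|h @: R2| = #|R2|, #|h @: R3| = #|R3| & #|h @: R| <= clique_number_in R].
Proof.
have dR5 : [disjoint R & Q5].
  rewrite disjoint_sym; apply: disjointWr Q5_disjoint_M.
  by apply/subsetP => x; rewrite !inE => /orP[] ->; rewrite ?orbT.
have [h [h_proper card_hR]] := colorable_on_ord (colorable_on_Q5_free dR5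
  (fun C sCR cC => card_le_clique_number_in sCR cC)).
have card_h (X : {set T}) : X \subset R -> is_clique e X -> #|h @: X| = #|X|.
  move=> sXR cX; apply/eqP; rewrite eqn_leq leq_imset_card.
  exact: card_clique_le_colours h_proper sXR cX (subxx _).
by exists _, h; split; rewrite // card_h // ?subsetUl ?subsetUr.
Qed.

Section Split.
Variables (n : nat) (h : T -> 'I_n) (K : {set 'I_n}) (T2 T3 : {set T}).
Hypothesis h_proper : {in R &, forall x y, e x y -> h x != h y}.
Hypotheses (sT2 : T2 \subset Q2) (sT3 : T3 \subset Q3).
Hypothesis top2 : forall t v, t \in T2 -> v \in Q2 :\: T2 ->
  #|nbhd e v :&: Q1| <= #|nbhd e t :&: Q1|.
Hypothesis top3 : forall t v, t \in T3 -> v \in Q3 :\: T3 ->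
  #|nbhd e v :&: Q4| <= #|nbhd e t :&: Q4|.

Local Notation RY := [set x in R | h x \notin K].
Local Notation Y := (T2 :|: T3 :|: RY).
Local Notation A := (~: (Q5 :|: Y)).

Lemma Y_subset_M : Y \subset M.
Proof.
apply/subsetP => x /setUP[/setUP[/(subsetP sT2) | /(subsetP sT3)] | /setIdP[]];
  rewrite !inE.
- by move=> ->.
- by move=> ->; rewrite !orbT.
- by case/orP=> -> _; rewrite ?orbT.
Qed.

Lemma card_clique_Y (C : {set T}) :
  C \subset Y -> is_clique e C -> #|C| <= #|T2| + #|T3| + #|h @: R :\: K|.
Proof.
move=> sCY cC; have CRY : #|C :&: RY| <= #|h @: R :\: K|.
  apply: (card_clique_le_colours h_proper _ (clique_subset (subsetIl _ _) cC)).
    by apply/subsetP => x /setIP[_ /setIdP[]].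
  apply/subsetP => _ /imsetP[x /setIP[_ /setIdP[xR xK]] ->].
  by rewrite inE xK imset_f.
apply: leq_trans (card_subset_setU (A := T2 :|: T3) (B := C :&: RY) _) _.
  apply/subsetP => x xC; move: (subsetP sCY x xC).
  by rewrite !inE xC => /orP[/orP[] -> | ->]; rewrite ?orbT.
exact: leq_add (leq_card_setU _ _).1 CRY.
Qed.

Lemma card_clique_A_colours (X C : {set T}) :
  X \subset R -> C \subset A -> is_clique e C -> #|C :&: X| <= #|h @: X :&: K|.
Proof.
move=> sXR sCA cC; apply: (card_clique_le_colours h_proper _ (clique_subset (subsetIl _ _) cC)).
  exact: subset_trans (subsetIr _ _) sXR.
apply/subsetP => _ /imsetP[x /setIP[xC xX] ->]; rewrite inE imset_f //=.
apply: contraTT (subsetP sCA x xC) => hxK.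
by rewrite inE negbK; apply/setUP; right; apply/setUP; right; rewrite inE (subsetP sXR x xX).
Qed.

Lemma card_clique_A_side (P S X Tp C : {set T}) x :
  graded_pair e S P -> is_clique e S -> Tp \subset S ->
  (forall t v, t \in Tp -> v \in S :\: Tp -> #|nbhd e v :&: P| <= #|nbhd e t :&: P|) ->
  Tp \subset Y -> X \subset R -> nbhd e x :\: Q5 \subset P :|: S :|: X ->
  C \subset A -> is_clique e C -> x \in C -> x \in P ->
  #|C| <= #|P| + #|h @: X :&: K| \/
  #|C| + #|Tp| <= clique_number_in (P :|: S) + #|h @: X :&: K|.
Proof.
move=> gSP cS sTS topTp sTY sXR nbhdx sCA cC xC xP; have /cliqueP cCP := cC.
have notY y : y \in C -> y \notin Q5 :|: Y by move/(subsetP sCA); rewrite inE.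
set D := C :&: (P :|: S).
have sub : C \subset D :|: (C :&: X).
  apply/subsetP => y yC; rewrite !inE yC /=.
  have [<- | xy] := eqVneq x y; first by rewrite xP.
  have : y \in nbhd e x :\: Q5.
    by move: (notY y yC); rewrite !inE negb_or cCP // => /andP[->].
  by move/(subsetP nbhdx); rewrite !inE => /orP[/orP[] | ] ->; rewrite ?orbT.
have dDT : [disjoint D & Tp].
  apply/pred0P => y /=; apply/negbTE/andP => -[/setIP[yC _] /(subsetP sTY) yY].
  by move: (notY y yC); rewrite inE yY orbT.
have := clique_top_subset_bound gSP cS sTS topTp
  (clique_subset (subsetIl _ _) cC) (subsetIr _ _) dDT.
have hX := card_clique_A_colours sXR sCA cC; have hC := card_subset_setU sub.
case=> hD; [left | right]; first exact: leq_trans hC (leq_add hD hX).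
by apply: leq_trans (leq_add hC (leqnn #|Tp|)) _; rewrite addnAC leq_add.
Qed.

Lemma card_clique_A_middle (C : {set T}) :
  C \subset A -> is_clique e C -> [disjoint C & Q1] -> [disjoint C & Q4] ->
  #|C| <= #|Q2 :\: T2| + #|Q3 :\: T3| + #|h @: R :&: K|.
Proof.
move=> sCA cC dC1 dC4.
have sub : C \subset (Q2 :\: T2 :|: Q3 :\: T3) :|: (C :&: R).
  apply/subsetP => y yC; move: (subsetP sCA y yC); rewrite in_setC => yY.
  have := mem_M (negbT (disjointFr dC1 yC)) (negbT (disjointFr dC4 yC)).
  move: yY; rewrite !inE yC /= !negb_or => /andP[y5 /andP[/andP[yT2 yT3] _]].
  rewrite (negbTE yT2) (negbTE yT3) (negbTE y5) /= => /(_ isT).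
  by case: (y \in Q2); case: (y \in Q3); case: (y \in R2); case: (y \in R3).
apply: leq_trans (card_subset_setU sub) _.
exact: leq_add (leq_card_setU _ _).1 (card_clique_A_colours (subxx _) sCA cC).
Qed.

Lemma card_clique_A c :
  #|Q1| + #|h @: R2 :&: K| <= c ->
  clique_number_in (Q1 :|: Q2) + #|h @: R2 :&: K| <= c + #|T2| ->
  #|Q4| + #|h @: R3 :&: K| <= c ->
  clique_number_in (Q4 :|: Q3) + #|h @: R3 :&: K| <= c + #|T3| ->
  #|Q2 :\: T2| + #|Q3 :\: T3| + #|h @: R :&: K| <= c ->
  forall C : {set T}, C \subset A -> is_clique e C -> #|C| <= c.
Proof.
move=> b1 b12 b4 b43 bM C sCA cC.
have side (P S X Tp : {set T}) :
    #|C| <= #|P| + #|h @: X :&: K| \/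
    #|C| + #|Tp| <= clique_number_in (P :|: S) + #|h @: X :&: K| ->
    #|P| + #|h @: X :&: K| <= c ->
    clique_number_in (P :|: S) + #|h @: X :&: K| <= c + #|Tp| -> #|C| <= c.
  move=> [hC | hC] hP hPS; first exact: leq_trans hC hP.
  by rewrite -(leq_add2r #|Tp|); apply: leq_trans hC hPS.
have sT2Y : T2 \subset Y by rewrite -!setUA subsetUl.
have sT3Y : T3 \subset Y by rewrite (subset_trans (subsetUr T2 T3)) ?subsetUl.
have [dC1 | /pred0Pn[x /andP[xC xQ1]]] := boolP [disjoint C & Q1]; last first.
  apply: side b1 b12; apply: card_clique_A_side (graded_pair_sym g12) cQ2 sT2 top2 sT2Y
    (subsetUl _ _) (nbhd_Q1 xQ1) sCA cC xC xQ1.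
have [dC4 | /pred0Pn[x /andP[xC xQ4]]] := boolP [disjoint C & Q4]; last first.
  apply: side b4 b43; apply: card_clique_A_side g34 cQ3 sT3 top3 sT3Y
    (subsetUr _ _) (nbhd_Q4 xQ4) sCA cC xC xQ4.
exact: leq_trans (card_clique_A_middle sCA cC dC1 dC4) bM.
Qed.

Lemma colorable_on_split c :
  #|T2| + #|T3| + #|h @: R :\: K| <= #|Q5| ->
  (forall C : {set T}, C \subset A -> is_clique e C -> #|C| <= c) ->
  colorable_on [set: T] (#|Q5| + c).
Proof.
move=> bY bA; have dY5 : [disjoint Y & Q5].
  by rewrite disjoint_sym; apply: disjointWr Y_subset_M Q5_disjoint_M.
have colQ5Y : colorable_on (Q5 :|: Y) #|Q5|.
  apply: colorable_on_setU_anticomplete (colorable_on_card Q5) _.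
    exact: anticomplete_to_subset (subxx _) Y_subset_M Q5_anti.
  apply: colorable_on_Q5_free dY5 _ => C sCY cC.
  exact: leq_trans (card_clique_Y sCY cC) bY.
have colA : colorable_on A c.
  by apply: colorable_on_Q5_free bA; rewrite disjoint_sym disjoints_subset setCK subsetUl.
by apply: colorable_on_subset (colorable_on_setU colQ5Y colA); rewrite ?setUCr.
Qed.

End Split.

Lemma card_Q1_Q5 : #|Q1| + #|Q5| <= clique_number e.
Proof. by rewrite addnC -clique_number_inT (card_complete_cliques _ cQ5 cQ1 Q5_Q1) ?subsetT. Qed.

Lemma card_Q4_Q5 : #|Q4| + #|Q5| <= clique_number e.
Proof. by rewrite addnC -clique_number_inT (card_complete_cliques _ cQ5 cQ4 Q5_Q4) ?subsetT. Qed.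

Lemma card_Q23_R : #|Q2| + #|Q3| + clique_number_in R <= clique_number e.
Proof.
rewrite -card_setU_disjoint ?complete_to_disjoint //.
exact: clique_number_in_complete (clique_setU cQ2 cQ3 Q2_Q3) Q23_R.
Qed.

Lemma band_colorable : colorable_on [set: T] ((5 * clique_number e + 3) %/ 4).
Proof.
set w := clique_number e; set k := _ %/ 4; set z := #|Q5|.
have [n [h [h_proper cF2 cF3 cFR]]] := colouring_R.
set F2 := h @: R2; set F3 := h @: R3.
have hR : h @: R = F2 :|: F3 by rewrite imsetU.
have hp2 : #|F2 :&: F3| + #|F2 :\: F3| = #|R2| by rewrite cardsID.
have hp3 : #|F2 :&: F3| + #|F3 :\: F2| = #|R3| by rewrite setIC cardsID.
have hp23 := card_setU_split F2 F3; rewrite -hR in hp23.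
have hl := clique_number_in_complete cR2 R2_Q12.
have hr := clique_number_in_complete cR3 R3_Q43.
have hq := card_Q23_R.
have [x2 [x3 [xp [y2 [y3 [[bx2 bx3 bxp by2 by3] [[n1 n2 n3 n4] [nY nA]]]]]]]] :=
  @colour_budget w k z #|Q1| #|Q4| #|Q2| #|Q3| _ _
    #|F2 :&: F3| #|F2 :\: F3| #|F3 :\: F2| (leq_mul_divn_up (5 * w) (isT : 0 < 4))
    card_Q1_Q5 card_Q4_Q5 (clique_number_in_setU Q2 cQ1) (clique_number_in_setU Q3 cQ4)
    ltac:(clear -hl hp2; lia) ltac:(clear -hr hp3; lia) ltac:(clear -hq hp23 cFR; lia).
have [T2 [sT2 cT2 top2]] :=
  exists_top_subset (fun v => #|nbhd e v :&: Q1|) (leq_subr x2 #|Q2|).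
have [T3 [sT3 cT3 top3]] :=
  exists_top_subset (fun v => #|nbhd e v :&: Q4|) (leq_subr x3 #|Q3|).
have [K sK [cK cK2 cK3]] := exists_split_subset bxp by2 by3.
have cKR : #|h @: R :&: K| = #|K| by rewrite hR (setIidPr sK).
have cRK : #|h @: R :\: K| = #|h @: R| - #|K| by rewrite hR cardsDS.
have cQ2T : #|Q2 :\: T2| = x2 by rewrite cardsDS // cT2 subKn.
have cQ3T : #|Q3 :\: T3| = x3 by rewrite cardsDS // cT3 subKn.
have z_le_k : z <= k by clear -nA; lia.
rewrite -(subnKC z_le_k); apply: (colorable_on_split (K := K) h_proper sT2 sT3).
  by rewrite cRK cT2 cT3 cK; clear -bx2 bx3 bxp by2 by3 nY hp23; lia.
apply: (card_clique_A h_proper sT2 sT3 top2 top3).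
all: rewrite -/F2 -/F3 ?cKR ?cQ2T ?cQ3T ?cT2 ?cT3 ?cK.
- by clear -cK2 n1; lia.
- by clear -cK2 n2 bx2; lia.
- by clear -cK3 n3; lia.
- by clear -cK3 n4 bx3; lia.
- by clear -nA; lia.
Qed.

End Band.

End SimpleGraph.

Theorem theorem5p13 (T : finType) (e : rel T)
  (Q1 Q2 Q3 Q4 Q5 R2 R3 : {set T}) :
  simple_graph e ->
  band e Q1 Q2 Q3 Q4 Q5 R2 R3 ->
  chromatic_number e <= (5 * clique_number e + 3) %/ 4.
Proof.
by move=> [esym eirr] bandG; apply: chromatic_number_le; apply: band_colorable bandG.
Qed.
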